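(* Let $D,W,N_0,\zeta,P_A,h,g,P^{max}>0$, $\gamma=\frac{g\zeta P_A h}{WN_0}$, $\alpha=\mathbb{L}_0\!\left(\frac{\gamma-1}{e}\right)+1$ with $\mathbb{L}_0$ the principal Lambert W function, and $$\dot\tau_S=\frac{D\ln 2}{W\alpha},\quad \dot\tau_0=\frac{D\ln 2}{W\alpha\gamma}\left(2^{\alpha/\ln 2}-1\right),\quad \ddot\tau_S=\frac{D}{W\log_2\left(1+\frac{P^{max}g}{WN_0}\right)},\quad \ddot\tau_0=\frac{P^{max}\ddot\tau_S}{\zeta P_A h}.$$ Consider the problem: minimize $\tau_0+\tau_S$ over $\tau_0,\tau_S,P\ge0$ subject to $P\tau_S\le\zeta P_A h\tau_0$, $\tau_S W\log_2\left(1+\frac{Pg}{WN_0}\right)\ge D$, and $P\le P^{max}$. If $\zeta P_A h\dot\tau_0/\dot\tau_S\le P^{max}$, then $(\tau_0,\tau_S,P)=(\dot\tau_0,\dot\tau_S,\zeta P_A h\dot\tau_0/\dot\tau_S)$ is optimal. Otherwise $(\tau_0,\tau_S,P)=(\ddot\tau_0,\ddot\tau_S,P^{max})$ is optimal.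
   Context: Single source wireless powered network: the source harvests energy $\zeta P_A h\tau_0$ during time $\tau_0$, then transmits $D$ bits with power $P\le P^{max}$ during time $\tau_S$ over an AWGN channel with gain $g$, bandwidth $W$ and noise spectral density $N_0$. *)

From Stdlib Require Import Reals ClassicalEpsilon.
Open Scope R_scope.

(* Principal branch of the Lambert W function: for x >= -1/e, the unique
   w >= -1 with w * e^w = x (chosen by Hilbert's epsilon; its value is
   unspecified outside the domain x >= -1/e). *)
Definition LambertW0 (x : R) : R :=
  epsilon (inhabits 0) (fun w => -1 <= w /\ w * exp w = x).

Definition log2 (x : R) : R := ln x / ln 2.

Definition feasible (D W N0 zeta PA h g Pmax : R) (t0 tS P : R) : Prop :=
  0 <= t0 /\ 0 <= tS /\ 0 <= P /\
  P * tS <= zeta * PA * h * t0 /\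
  tS * W * log2 (1 + P * g / (W * N0)) >= D /\
  P <= Pmax.

Definition optimal (D W N0 zeta PA h g Pmax : R) (t0 tS P : R) : Prop :=
  feasible D W N0 zeta PA h g Pmax t0 tS P /\
  forall t0' tS' P', feasible D W N0 zeta PA h g Pmax t0' tS' P' ->
    t0 + tS <= t0' + tS'.

(* With a := g/(W N0) and c := zeta PA h, every feasible point satisfies
   tau0 + tauS >= tauS (c + P)/c >= D ln 2 (c + P) / (W c ln (1 + a P)), so the
   optimum minimises the one-variable function P |-> (c + P)/ln (1 + a P) over
   (0, Pmax].  Writing x = 1 + a P, this is (a c - 1 + x)/(a ln x), whose unique
   stationary point solves x (ln x - 1) = a c - 1, i.e. x = exp alpha with alpha
   from the Lambert W function.  The function is decreasing before exp alpha and
   increasing after it, so the optimal power is the stationary one when it is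
   admissible and Pmax otherwise.  Both comparisons reduce to tangent-line bounds
   for ln. *)
From Stdlib Require Import Reals Lra Psatz ClassicalEpsilon.
From Coquelicot Require Import Rcomplements.
Open Scope R_scope.

Lemma ln_pos x : 1 < x -> 0 < ln x.
Proof. intro Hx; rewrite <- ln_1; apply ln_increasing; lra. Qed.

Lemma ln_le_sub_1 x : 0 < x -> ln x <= x - 1.
Proof.
  intro Hx; pose proof (exp_ineq1_le (ln x)) as Hexp.
  rewrite exp_ln in Hexp by exact Hx; lra.
Qed.

Lemma ln_le_tangent x y : 0 < x -> 0 < y -> ln y <= ln x + y / x - 1.
Proof.
  intros Hx Hy.
  assert (Hyx : 0 < y / x) by (apply Rdiv_lt_0_compat; assumption).
  pose proof (ln_le_sub_1 _ Hyx) as Hln.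
  unfold Rdiv in Hln |- *.
  rewrite ln_mult, ln_Rinv in Hln by (try apply Rinv_0_lt_compat; assumption).
  lra.
Qed.

Lemma xlnx_sub_le x y : 1 <= x <= y -> x * ln x - x <= y * ln y - y.
Proof.
  intros [Hx Hxy].
  pose proof (ln_le_tangent y x ltac:(lra) ltac:(lra)) as Htan.
  assert (Hlnx : 0 <= ln x).
  { destruct (Rle_lt_or_eq_dec 1 x Hx) as [H1 | <-];
      [apply Rlt_le, ln_pos | rewrite ln_1]; lra. }
  assert (y * (ln y - ln x) >= y - x).
  { replace (y - x) with (y * (1 - x / y)) by (field; lra).
    apply Rle_ge, Rmult_le_compat_l; lra. }
  nra.
Qed.

(* For 1 < y <= x this reads (K + x)/ln x <= (K + y)/ln y: the hypothesis on K
   keeps x to the left of the minimum of y |-> (K + y)/ln y. *)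
Lemma ln_mul_le_of_xlnx_le K x y :
  1 < x -> 0 < y <= x -> x * ln x - x <= K -> (K + x) * ln y <= (K + y) * ln x.
Proof.
  intros Hx [Hy Hyx] HK.
  pose proof (ln_pos x Hx) as Hlnx.
  pose proof (ln_le_tangent x y ltac:(lra) Hy) as Htan.
  assert (HKx : 0 < K + x) by nra.
  assert (Hslope : (K + x) * (y / x - 1) <= (y - x) * ln x).
  { replace ((K + x) * (y / x - 1)) with ((K + x) / x * (y - x)) by (field; lra).
    assert (ln x <= (K + x) / x) by (apply Rle_div_r; lra).
    nra. }
  nra.
Qed.

Lemma Rpower_div_ln b x : 1 < b -> Rpower b (x / ln b) = exp x.
Proof.
  intro Hb; pose proof (ln_pos b Hb).
  unfold Rpower; f_equal; field; lra.
Qed.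

Lemma LambertW0_spec t :
  - / exp 1 < t -> -1 < LambertW0 t /\ LambertW0 t * exp (LambertW0 t) = t.
Proof.
  intro Ht.
  assert (Hexp_m1 : exp (-1) = / exp 1) by (rewrite <- exp_Ropp; f_equal; ring).
  assert (Hex : exists w, -1 <= w /\ w * exp w = t).
  { set (y := Rabs t + 1).
    assert (Habs : t <= Rabs t) by apply RRle_abs.
    assert (Hy : 1 <= y) by (unfold y; pose proof (Rabs_pos t); lra).
    assert (Hexp_y : 1 <= exp y) by (pose proof (exp_ineq1_le y); lra).
    destruct (IVT_cor (fun w => w * exp w - t) (-1) y ltac:(reg) ltac:(lra))
      as [w [Hw Hroot]].
    { assert (y <= y * exp y) by nra.
      assert (-1 * exp (-1) - t < 0) by lra.
      assert (y * exp y - t > 0) by (unfold y in *; lra).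
      nra. }
    exists w; split; lra. }
  destruct (epsilon_spec (inhabits 0) (fun w => -1 <= w /\ w * exp w = t) Hex)
    as [[Hlt | Heq] Hprod];
    fold (LambertW0 t) in *.
  - split; assumption.
  - rewrite <- Heq, Hexp_m1 in Hprod; lra.
Qed.

Lemma LambertW0_shift gamma alpha :
  0 < gamma -> alpha = LambertW0 ((gamma - 1) / exp 1) + 1 ->
  0 < alpha /\ exp alpha * (alpha - 1) = gamma - 1.
Proof.
  intros Hgamma ->.
  pose proof (exp_pos 1) as He.
  assert (Harg : - / exp 1 < (gamma - 1) / exp 1).
  { unfold Rdiv; pose proof (Rinv_0_lt_compat _ He); nra. }
  destruct (LambertW0_spec _ Harg) as [Hw Hprod].
  set (w := LambertW0 ((gamma - 1) / exp 1)) in *.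
  split; [lra|].
  rewrite exp_plus.
  replace (exp w * exp 1 * (w + 1 - 1)) with (w * exp w * exp 1) by ring.
  rewrite Hprod; field; lra.
Qed.

Section Problem.

Variables D W N0 zeta PA h g Pmax : R.
Hypotheses (HD : 0 < D) (HW : 0 < W) (HN0 : 0 < N0) (Hzeta : 0 < zeta)
  (HPA : 0 < PA) (Hh : 0 < h) (Hg : 0 < g) (HPmax : 0 < Pmax).

Let a := g / (W * N0).
Let c := zeta * PA * h.

Let a_pos : 0 < a.
Proof. unfold a; apply Rdiv_lt_0_compat; nra. Qed.

Let c_pos : 0 < c.
Proof. unfold c; apply Rmult_lt_0_compat; nra. Qed.

Let ln2_pos : 0 < ln 2.
Proof. apply ln_pos; lra. Qed.

Let snr_eq P : P * g / (W * N0) = P * a.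
Proof. unfold a; field; nra. Qed.

Lemma feasible_sum_ge m t0 tS P :
  0 < m ->
  (forall P', 0 < P' -> P' <= Pmax -> m * ln (1 + P' * a) <= a * (c + P')) ->
  feasible D W N0 zeta PA h g Pmax t0 tS P ->
  D * ln 2 * m / (W * a * c) <= t0 + tS.
Proof.
  intros Hm Hbound [Ht0 [HtS [HP [Henergy [Hrate HPle]]]]].
  rewrite snr_eq in Hrate; unfold log2 in Hrate.
  assert (HPpos : 0 < P).
  { destruct HP as [HP | <-]; [exact HP|].
    rewrite Rmult_0_l, Rplus_0_r, ln_1 in Hrate; unfold Rdiv in Hrate; lra. }
  set (L := ln (1 + P * a)) in *.
  assert (HL : 0 < L) by (apply ln_pos; nra).
  assert (Hbits : D * ln 2 <= tS * W * L).
  { apply Rge_le in Hrate.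
    replace (tS * W * L) with (tS * W * (L / ln 2) * ln 2) by (field; lra).
    nra. }
  specialize (Hbound P HPpos HPle); fold L in Hbound.
  fold c in Henergy.
  assert (HWa : 0 < W * a) by (apply Rmult_lt_0_compat; assumption).
  apply Rle_div_l; [nra|].
  assert (Hchain : D * ln 2 * m <= W * a * (c * tS + P * tS)).
  { apply Rle_trans with (tS * W * L * m); [nra|].
    replace (W * a * (c * tS + P * tS)) with (tS * W * (a * (c + P))) by ring.
    replace (tS * W * L * m) with (tS * W * (m * L)) by ring.
    apply Rmult_le_compat_l; [nra | exact Hbound]. }
  nra.
Qed.

Lemma optimal_unsaturated alpha :
  0 < alpha -> exp alpha * (alpha - 1) = a * c - 1 -> (exp alpha - 1) / a <= Pmax ->
  optimal D W N0 zeta PA h g Pmax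
    (D * ln 2 / (W * alpha * (a * c)) * (exp alpha - 1)) (D * ln 2 / (W * alpha))
    ((exp alpha - 1) / a).
Proof.
  intros Halpha Hkey Hcase.
  set (X := exp alpha) in *.
  assert (HX : 1 < X) by (unfold X; pose proof (exp_ineq1 alpha); lra).
  assert (HWalpha : 0 < W * alpha) by (apply Rmult_lt_0_compat; assumption).
  assert (Hac : 0 < a * c) by (apply Rmult_lt_0_compat; assumption).
  assert (HtS : 0 < D * ln 2 / (W * alpha)) by (apply Rdiv_lt_0_compat; nra).
  split.
  - repeat split.
    + apply Rmult_le_pos; [|lra].
      apply Rlt_le, Rdiv_lt_0_compat; nra.
    + lra.
    + apply Rlt_le, Rdiv_lt_0_compat; lra.
    + right; fold c; field; repeat split; lra.
    + rewrite snr_eq.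
      replace (1 + (X - 1) / a * a) with X by (field; lra).
      unfold log2, X; rewrite ln_exp.
      right; field; repeat split; lra.
    + exact Hcase.
  - intros t0 tS P Hfeas.
    replace (D * ln 2 / (W * alpha * (a * c)) * (X - 1) + D * ln 2 / (W * alpha))
      with (D * ln 2 * X / (W * a * c)).
    2: { replace (X - 1) with (X * alpha - a * c) by lra; field; repeat split; lra. }
    apply (feasible_sum_ge X t0 tS P); [lra| |exact Hfeas].
    intros P' HP' _.
    pose proof (ln_le_tangent X (1 + P' * a) ltac:(lra) ltac:(nra)) as Htan.
    unfold X at 1 in Htan; rewrite ln_exp in Htan.
    apply Rmult_le_compat_l with (r := X) in Htan; [|lra].
    replace (X * (alpha + (1 + P' * a) / X - 1)) with (X * (alpha - 1) + 1 + P' * a)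
      in Htan by (field; lra).
    lra.
Qed.

Lemma optimal_saturated alpha :
  exp alpha * (alpha - 1) = a * c - 1 -> Pmax < (exp alpha - 1) / a ->
  let tauS := D / (W * log2 (1 + Pmax * g / (W * N0))) in
  optimal D W N0 zeta PA h g Pmax (Pmax * tauS / c) tauS Pmax.
Proof.
  intros Hkey Hcase tauS.
  set (X := exp alpha) in *.
  set (xm := 1 + Pmax * a).
  assert (Hxm : 1 < xm) by (unfold xm; nra).
  assert (HxmX : xm < X).
  { unfold xm; apply (Rlt_div_r _ _ _ a_pos) in Hcase; lra. }
  set (Lm := ln xm).
  assert (HLm : 0 < Lm) by (apply ln_pos; exact Hxm).
  assert (HtauS : tauS = D * ln 2 / (W * Lm)).
  { unfold tauS, log2; rewrite snr_eq; fold xm Lm; field; repeat split; lra. }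
  assert (HtauS_pos : 0 < tauS) by (rewrite HtauS; apply Rdiv_lt_0_compat; nra).
  split.
  - repeat split.
    + apply Rlt_le, Rdiv_lt_0_compat; nra.
    + lra.
    + lra.
    + right; fold c; field; lra.
    + rewrite snr_eq; fold xm; unfold log2; fold Lm.
      rewrite HtauS; right; field; repeat split; lra.
    + lra.
  - intros t0 tS P Hfeas.
    set (m := a * (c + Pmax) / Lm).
    replace (Pmax * tauS / c + tauS) with (D * ln 2 * m / (W * a * c))
      by (unfold m; rewrite HtauS; field; repeat split; lra).
    apply (feasible_sum_ge m t0 tS P); [unfold m; apply Rdiv_lt_0_compat; nra| |exact Hfeas].
    intros P' HP' HP'le.
    assert (HxlnX : X * ln X - X = a * c - 1) by (rewrite <- Hkey; unfold X; rewrite ln_exp; ring).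
    assert (Hmono : xm * Lm - xm <= a * c - 1).
    { rewrite <- HxlnX; apply xlnx_sub_le; lra. }
    pose proof (ln_mul_le_of_xlnx_le (a * c - 1) xm (1 + P' * a) Hxm
                  ltac:(unfold xm; split; nra) Hmono) as Hcmp.
    fold Lm in Hcmp.
    replace (a * c - 1 + xm) with (a * (c + Pmax)) in Hcmp by (unfold xm; ring).
    replace (a * c - 1 + (1 + P' * a)) with (a * (c + P')) in Hcmp by ring.
    unfold m; replace (a * (c + Pmax) / Lm * ln (1 + P' * a))
      with (a * (c + Pmax) * ln (1 + P' * a) / Lm) by (field; lra).
    apply (Rle_div_l _ _ _ HLm); lra.
Qed.

End Problem.

Theorem theorem2 (D W N0 zeta PA h g Pmax : R) :
  0 < D -> 0 < W -> 0 < N0 -> 0 < zeta -> 0 < PA -> 0 < h -> 0 < g -> 0 < Pmax ->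
  let gamma := g * zeta * PA * h / (W * N0) in
  let alpha := LambertW0 ((gamma - 1) / exp 1) + 1 in
  let tauS1 := D * ln 2 / (W * alpha) in
  let tau01 := D * ln 2 / (W * alpha * gamma) * (Rpower 2 (alpha / ln 2) - 1) in
  let tauS2 := D / (W * log2 (1 + Pmax * g / (W * N0))) in
  let tau02 := Pmax * tauS2 / (zeta * PA * h) in
  (zeta * PA * h * tau01 / tauS1 <= Pmax ->
     optimal D W N0 zeta PA h g Pmax tau01 tauS1 (zeta * PA * h * tau01 / tauS1)) /\
  (~ (zeta * PA * h * tau01 / tauS1 <= Pmax) ->
     optimal D W N0 zeta PA h g Pmax tau02 tauS2 Pmax).
Proof.
  intros HD HW HN0 Hzeta HPA Hh Hg HPmax gamma alpha tauS1 tau01 tauS2 tau02.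
  assert (Hgamma : gamma = g / (W * N0) * (zeta * PA * h)) by (unfold gamma; field; nra).
  assert (Hgamma_pos : 0 < gamma).
  { unfold gamma; apply Rdiv_lt_0_compat;
      [repeat apply Rmult_lt_0_compat | apply Rmult_lt_0_compat]; assumption. }
  destruct (LambertW0_shift gamma alpha Hgamma_pos eq_refl) as [Halpha Hkey].
  rewrite Hgamma in Hkey.
  assert (Htau01 : tau01 = D * ln 2 / (W * alpha * (g / (W * N0) * (zeta * PA * h)))
                           * (exp alpha - 1)).
  { unfold tau01; rewrite Rpower_div_ln, Hgamma by lra; reflexivity. }
  assert (Hpower : zeta * PA * h * tau01 / tauS1 = (exp alpha - 1) / (g / (W * N0))).
  { rewrite Htau01; unfold tauS1.
    pose proof (ln_pos 2 ltac:(lra)); field; repeat split; nra. }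
  rewrite Hpower, Htau01; split; intro Hcase.
  - exact (optimal_unsaturated D W N0 zeta PA h g Pmax HD HW HN0 Hzeta HPA Hh Hg
             alpha Halpha Hkey Hcase).
  - apply (optimal_saturated D W N0 zeta PA h g Pmax HD HW HN0 Hzeta HPA Hh Hg HPmax
             alpha Hkey); lra.
Qed.
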